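(* Let $(K,\mathrm{val})$ be a valued field in which every strict unit admits a square root, let $A$ be a subring with $B\subseteq A\subseteq K$, $H=\mathrm{val}(A^\times)$, and let $\mathcal M$ be a quasi-quadratic module in $A$. Then: (1) $M_g^A(\mathcal M)$ is a quasi-quadratic module in $F$ for every $g\in G$; (2) if $g_1,g_2\in H\cup G_{\ge e}$ and $[\![g_1]\!]=[\![g_2]\!]$, then $M_{g_1}^A(\mathcal M)=M_{g_2}^A(\mathcal M)$; (3) if $g_1,g_2\in H\cup G_{\ge e}$, $\overline{g_1}=\overline{g_2}$ and $g_1\le g_2$, then $M_{g_1}^A(\mathcal M)\subseteq M_{g_2}^A(\mathcal M)$.
   Context: Let $(G,\le)$ be a totally ordered abelian group written multiplicatively with identity $e$; $G_{\ge e}=\{g\in G:g\ge e\}$, $G^2=\{g^2:g\in G\}$. Let $(K,\mathrm{val})$ be a valued field with surjective valuation $\mathrm{val}:K\to G\cup\{\infty\}$, valuation ring $B=\{x:\mathrm{val}(x)\ge e\}$, residue map $\pi:B\to F$, residue field $F$. A strict unit is $x\in B^\times$ with $\pi(x)=1$. For a subring $A$ with $B\subseteq A\subseteq K$ put $H=\mathrm{val}(A^\times)$ (a convex subgroup of $G$). For $g\in G$: $\overline g$ is its class in $G/G^2$, $[\![g]\!]$ its class in $G/H^2$. A quasi-quadratic module in a commutative ring $R$ is a subset $M\subseteq R$ with $M+M\subseteq M$ and $a^2M\subseteq M$ for all $a\in R$. A pseudo-angular component map is a map $\mathrm{p.an}:K^\times\to F^\times$ such that: (1) $\mathrm{p.an}(u)=\pi(u)$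 for $u\in B^\times$; (2) $\mathrm{p.an}(ux)=\pi(u)\mathrm{p.an}(x)$ for $u\in B^\times,x\in K^\times$; (3) for all $g\in G$, $c\in F^\times$ there is $w\in K$ with $\mathrm{val}(w)=g$, $\mathrm{p.an}(w)=c$; (4) for nonzero $x_1,x_2$ with $x_1+x_2\ne0$: if $\mathrm{val}(x_1)<\mathrm{val}(x_2)$ then $\mathrm{p.an}(x_1+x_2)=\mathrm{p.an}(x_1)$; if $\mathrm{val}(x_1)=\mathrm{val}(x_2)$ and $\mathrm{p.an}(x_1)+\mathrm{p.an}(x_2)\ne0$ then $\mathrm{val}(x_1+x_2)=\mathrm{val}(x_1)$ and $\mathrm{p.an}(x_1+x_2)=\mathrm{p.an}(x_1)+\mathrm{p.an}(x_2)$; (5) if $x,y\in K^\times$, $\overline{\mathrm{val}(x)}=\overline{\mathrm{val}(y)}$ and $\mathrm{p.an}(x)=\mathrm{p.an}(y)$ then $y=u^2x$ for some $u\in K^\times$; (6) for $a,u\in K^\times$ there is $k\in F^\times$ with $\mathrm{p.an}(au^2)=\mathrm{p.an}(a)k^2$. Such a map exists under the hypotheses; fix one. For a quasi-quadratic module $\mathcal M$ in $A$ and $g\in G$: $$M_g^A(\mathcal M)=\{\mathrm{p.an}(x):\ x\in\mathcal M\setminus\{0\},\ \mathrm{val}(x)=g\}\cup\{0\}\subseteq F.$$ *)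

From HB Require Import structures.
From mathcomp Require Import all_boot all_order all_algebra.
Set Implicit Arguments. Unset Strict Implicit. Unset Printing Implicit Defensive.
Import GRing.Theory.
Local Open Scope ring_scope.

Record oAbGroup := OAbGroup {
  oag_sort :> Type;
  gmul : oag_sort -> oag_sort -> oag_sort;
  gone : oag_sort;
  ginv : oag_sort -> oag_sort;
  gle : oag_sort -> oag_sort -> Prop;
  gmulA : forall a b c, gmul a (gmul b c) = gmul (gmul a b) c;
  gmulC : forall a b, gmul a b = gmul b a;
  gmul1 : forall a, gmul a gone = a;
  gmulV : forall a, gmul a (ginv a) = gone;
  gle_refl : forall a, gle a a;
  gle_trans : forall a b c, gle a b -> gle b c -> gle a c;
  gle_anti : forall a b, gle a b -> gle b a -> a = b;
  gle_total : forall a b, gle a b \/ gle b a;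
  gle_mul : forall a b c, gle a b -> gle (gmul a c) (gmul b c)
}.

Section ValDefs.
Variable G : oAbGroup.

(* order on G ∪ {∞}, with None = ∞ the top element *)
Definition ole (a b : option G) : Prop :=
  match a, b with
  | _, None => True
  | None, Some _ => False
  | Some x, Some y => gle x y
  end.
Definition olt (a b : option G) : Prop := ole a b /\ a <> b.

Definition same_class_mod_sq (S : G -> Prop) (g1 g2 : G) : Prop :=
  exists h, S h /\ g1 = gmul g2 (gmul h h).

Variable K : fieldType.

Definition is_valuation (val : K -> option G) : Prop :=
  [/\ forall x, val x = None <-> x = 0,
      forall x y gx gy, val x = Some gx -> val y = Some gy ->
        val (x * y) = Some (gmul gx gy),
      forall x y (g : option G), ole g (val x) -> ole g (val y) ->
        ole g (val (x + y))
    & forall g : G, exists x, val x = Some g].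

Definition valring (val : K -> option G) (x : K) : Prop := ole (Some (gone G)) (val x).

Variable F : fieldType.

(* residue map pi : B -> F onto the residue field (values outside B irrelevant):
   a surjective ring morphism on B whose kernel is the maximal ideal *)
Definition is_residue_map (val : K -> option G) (pi : K -> F) : Prop :=
  [/\ forall x y, valring val x -> valring val y -> pi (x + y) = pi x + pi y,
      forall x y, valring val x -> valring val y -> pi (x * y) = pi x * pi y,
      pi 1 = 1,
      forall x, valring val x -> (pi x = 0 <-> olt (Some (gone G)) (val x))
    & forall c, exists x, valring val x /\ pi x = c].

Definition Bunit (val : K -> option G) (x : K) : Prop := val x = Some (gone G).

Definition strict_unit (val : K -> option G) (pi : K -> F) (x : K) : Prop :=
  Bunit val x /\ pi x = 1.

Definition is_pseudo_angular (val : K -> option G) (pi : K -> F) (pan : K -> F) : Prop :=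
  (forall x, x != 0 -> pan x != 0) /\
  (forall u, Bunit val u -> pan u = pi u) /\
  (forall u x, Bunit val u -> x != 0 -> pan (u * x) = pi u * pan x) /\
  (forall (g : G) (c : F), c != 0 -> exists w, val w = Some g /\ pan w = c) /\
  (forall x1 x2, x1 != 0 -> x2 != 0 -> x1 + x2 != 0 ->
     (olt (val x1) (val x2) -> pan (x1 + x2) = pan x1) /\
     (val x1 = val x2 -> pan x1 + pan x2 != 0 ->
        val (x1 + x2) = val x1 /\ pan (x1 + x2) = pan x1 + pan x2)) /\
  (forall x y gx gy, x != 0 -> y != 0 -> val x = Some gx -> val y = Some gy ->
     same_class_mod_sq (fun _ => True) gx gy -> pan x = pan y ->
     exists u, u != 0 /\ y = u ^+ 2 * x) /\
  (forall a u, a != 0 -> u != 0 ->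
     exists k, k != 0 /\ pan (a * u ^+ 2) = pan a * k ^+ 2).

Definition is_overring (val : K -> option G) (A : K -> Prop) : Prop :=
  [/\ A 1,
      forall x y, A x -> A y -> A (x - y),
      forall x y, A x -> A y -> A (x * y)
    & forall x, valring val x -> A x].

Definition valunits (val : K -> option G) (A : K -> Prop) (g : G) : Prop :=
  exists a, A a /\ a != 0 /\ A a^-1 /\ val a = Some g.

Definition Mg (val : K -> option G) (pan : K -> F) (M : K -> Prop) (g : G) (c : F) : Prop :=
  c = 0 \/ exists x, M x /\ x != 0 /\ val x = Some g /\ pan x = c.

End ValDefs.

Definition quasi_quadratic_module (R : comNzRingType) (S : R -> Prop) (M : R -> Prop) : Prop :=
  [/\ forall x, M x -> S x,
      forall x y, M x -> M y -> M (x + y)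
    & forall a x, S a -> M x -> M (a ^+ 2 * x)].

From mathcomp Require Import all_boot all_order all_algebra.
From mathcomp Require Import ring.
From Stdlib Require Import Classical.
Local Open Scope ring_scope.
Import GRing.Theory.

(* Everything follows from two ways of moving
   an element x of M while controlling its angular component:
   - multiplying by the square u^2 of a unit u of B keeps the value and
     multiplies pan x by pi(u)^2; since every nonzero residue lifts to a
     unit, M_g is stable under c |-> a^2 c  (Mg_sqscale);
   - multiplying by b^2 with b in A changes the value by val(b)^2 and
     pan x by some nonzero square k^2 (axiom (6)), which the previous
     move then cancels: M_g ⊆ M_{g val(b)^2}  (Mg_shift).
   Additivity of M_g comes from axiom (4) of pseudo-angular maps.
   Part (2) applies Mg_shift to a unit a of A and to a^-1; part (3)
   applies it to an element of B of value h^-1 where g1 = g2 h^2, which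
   lies in B because g1 <= g2 forces h <= e. *)

Section OrderedGroup.
Context {G : oAbGroup}.

Lemma gmul1l (a : G) : gmul (gone G) a = a.
Proof. by rewrite gmulC gmul1. Qed.

Lemma gmulK (a h : G) : gmul (gmul a h) (ginv h) = a.
Proof. by rewrite -gmulA gmulV gmul1. Qed.

Lemma gmul_cancel (a b c : G) : gmul a b = gmul a c -> b = c.
Proof.
move=> E; have : gmul (ginv a) (gmul a b) = gmul (ginv a) (gmul a c) by rewrite E.
by rewrite !gmulA (gmulC (ginv a)) gmulV !gmul1l.
Qed.

Lemma gsq_eq1 {b : G} : gmul b b = gone G -> b = gone G.
Proof.
move=> E; case: (gle_total b (gone G)) => Hb; have := gle_mul b Hb;
  rewrite E gmul1l => Hb'; exact: gle_anti.
Qed.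

Lemma ginv_unique {a b : G} : gmul a b = gone G -> b = ginv a.
Proof. by move=> E; apply: (@gmul_cancel a); rewrite E gmulV. Qed.

Lemma gmul_sqK (g h : G) : gmul (gmul g (gmul h h)) (gmul (ginv h) (ginv h)) = g.
Proof. by rewrite !gmulA !gmulK. Qed.

Lemma gle_sq_class {g1 g2 h : G} :
  g1 = gmul g2 (gmul h h) -> gle g1 g2 -> gle (gone G) (ginv h).
Proof.
move=> Eg Hle.
have hh : gle (gmul h h) (gone G).
  have := gle_mul (ginv g2) Hle; rewrite Eg gmulV.
  by rewrite [gmul (gmul g2 _) _]gmulC gmulA [gmul (ginv g2) g2]gmulC gmulV gmul1l.
have hle : gle h (gone G).
  case: (gle_total h (gone G)) => // Hh; apply: gle_trans hh.
  by have := gle_mul h Hh; rewrite gmul1l.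
by have := gle_mul (ginv h) hle; rewrite gmulV gmul1l.
Qed.

End OrderedGroup.

Section Valuation.
Context {G : oAbGroup} {K : fieldType} {val : K -> option G}.
Hypothesis Hval : is_valuation val.

Lemma val_neq0 {x : K} : x != 0 -> exists g, val x = Some g.
Proof.
case: Hval => Hv0 _ _ _ xn; case E: (val x) => [g|]; first by exists g.
by move/(proj1 (Hv0 x)): E xn => ->; rewrite eqxx.
Qed.

Lemma val_Some_neq0 {x : K} {g : G} : val x = Some g -> x != 0.
Proof.
case: Hval => Hv0 _ _ _ E; apply/eqP => x0.
by move: E; rewrite (proj2 (Hv0 x) x0).
Qed.

Lemma val1 : val 1 = Some (gone G).
Proof.
case: Hval => _ Hvm _ _; have [a Ea] := val_neq0 (oner_neq0 K : (1 : K) != 0).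
have := Hvm _ _ _ _ Ea Ea; rewrite mulr1 Ea => -[E].
by congr Some; apply: (@gmul_cancel _ a); rewrite gmul1 -E.
Qed.

Lemma valN1 : val (-1) = Some (gone G).
Proof.
have N1n : (-1 : K) != 0 by rewrite oppr_eq0 oner_eq0.
case: Hval => _ Hvm _ _; have [b Eb] := val_neq0 N1n.
have := Hvm _ _ _ _ Eb Eb; rewrite mulrNN mulr1 val1 => -[E].
by rewrite Eb (gsq_eq1 (esym E)).
Qed.

Lemma val_inv {a : K} {h : G} : val a = Some h -> val a^-1 = Some (ginv h).
Proof.
case: Hval => _ Hvm _ _ va; have an := val_Some_neq0 va.
have [g' Eg'] := val_neq0 (invr_neq0 an : a^-1 != 0).
have := Hvm _ _ _ _ va Eg'; rewrite mulfV // val1 => -[E].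
by rewrite Eg' (ginv_unique (esym E)).
Qed.

Lemma val_BunitM {u : K} (x : K) : Bunit val u -> val (u * x) = val x.
Proof.
case: Hval => _ Hvm _ _ Hu; have [->|xn] := eqVneq x 0; first by rewrite mulr0.
by have [g Eg] := val_neq0 xn; rewrite (Hvm _ _ _ _ Hu Eg) Eg gmul1l.
Qed.

Lemma Bunit_sq {u : K} : Bunit val u -> Bunit val (u ^+ 2).
Proof. by move=> Hu; rewrite /Bunit expr2 val_BunitM. Qed.

Lemma Bunit_valring {u : K} : Bunit val u -> valring val u.
Proof. by rewrite /valring => ->; apply: gle_refl. Qed.

Lemma Bunit_neq0 {u : K} : Bunit val u -> u != 0.
Proof. exact: val_Some_neq0. Qed.

Lemma valring0 : valring val 0.
Proof. by case: Hval => Hv0 _ _ _; rewrite /valring (proj2 (Hv0 0) erefl). Qed.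

End Valuation.

Section Residue.
Context {G : oAbGroup} {K F : fieldType} {val : K -> option G} { pi : K -> F }.
Hypotheses (Hval : is_valuation val) (Hpi : is_residue_map val pi).

Lemma pi0 : pi 0 = 0.
Proof.
case: Hpi => Hpadd _ _ _ _; have := Hpadd 0 0 (valring0 Hval) (valring0 Hval).
rewrite addr0 => E; apply: (@addrI _ (pi 0)); by rewrite addr0 -E.
Qed.

Lemma piN1 : pi (-1) = -1.
Proof.
case: Hpi => Hpadd _ Hp1 _ _.
have vr1 : valring val 1 by apply: Bunit_valring; exact: val1 Hval.
have vrN1 : valring val (-1) by apply: Bunit_valring; exact: valN1 Hval.
have := Hpadd 1 (-1) vr1 vrN1; rewrite subrr pi0 Hp1 => /eqP.
by rewrite eq_sym addrC addr_eq0 => /eqP.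
Qed.

Lemma Bunit_of_pi {u : K} : valring val u -> pi u != 0 -> Bunit val u.
Proof.
case: Hpi => _ _ _ Hp0 _ Hu Hn; rewrite /Bunit.
have notlt : ~ olt (Some (gone G)) (val u).
  by move=> Ho; move/eqP: Hn; apply; apply: (proj2 (Hp0 u Hu)).
move: Hu notlt; rewrite /valring; case: (val u) => [g|] /= Hg notlt.
- by apply: NNPP => Hne; apply: notlt; split => // -[E]; apply: Hne; rewrite E.
- by exfalso; apply: notlt; split.
Qed.

Lemma lift_residue {k : F} : k != 0 -> exists u, Bunit val u /\ pi u = k.
Proof.
case: Hpi => _ _ _ _ Hps kn; have [u [Hu Eu]] := Hps k.
by exists u; split=> //; apply: Bunit_of_pi => //; rewrite Eu.
Qed.

End Residue.

Section Fibres.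
Context {G : oAbGroup} {K F : fieldType} {val : K -> option G}.
Context { pi : K -> F } {pan : K -> F}.
Hypotheses (Hval : is_valuation val) (Hpi : is_residue_map val pi).
Hypothesis Hpan : is_pseudo_angular val pi pan.
Context {A M : K -> Prop}.
Hypotheses (HA : is_overring val A) (HM : quasi_quadratic_module A M).

Local Notation Mg := (Mg val pan M).

Lemma M_Bunit_sq {x u : K} : M x -> x != 0 -> Bunit val u ->
  [/\ M (u ^+ 2 * x), u ^+ 2 * x != 0, val (u ^+ 2 * x) = val x
    & pan (u ^+ 2 * x) = pi u ^+ 2 * pan x].
Proof.
case: Hpan => _ [_ [Hpux _]]; case: Hpi => _ Hpmul _ _ _.
case: HA => _ _ _ HAB; case: HM => _ _ HMsq Mx xn Hu.
have vru := Bunit_valring Hu.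
split; first exact: HMsq (HAB _ vru) Mx.
- by rewrite mulf_neq0 // expf_neq0 // (Bunit_neq0 Hval).
- by apply: (val_BunitM Hval); apply: (Bunit_sq Hval).
- rewrite Hpux //; last by apply: (Bunit_sq Hval).
  by rewrite !expr2 Hpmul.
Qed.

Lemma Mg_sqscale (g : G) (a c : F) : Mg g c -> Mg g (a ^+ 2 * c).
Proof.
move=> [->|[x [Mx [xn [vx px]]]]]; first by left; rewrite mulr0.
have [->|an] := eqVneq a 0; first by left; rewrite expr2 !mul0r.
have [u [Hu Eu]] := lift_residue Hpi an.
have [My yn vy py] := M_Bunit_sq Mx xn Hu.
by right; exists (u ^+ 2 * x); rewrite vy py Eu px.
Qed.

(* M_g is closed under addition, by axiom (4) of pseudo-angular maps. *)
Lemma Mg_add (g : G) (c1 c2 : F) : Mg g c1 -> Mg g c2 -> Mg g (c1 + c2).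
Proof.
case: Hpan => _ [_ [Hpux [_ [Hpadd _]]]]; case: HM => _ HMadd _.
move=> [->|[x1 [M1 [n1 [v1 p1]]]]]; first by rewrite add0r.
move=> [->|[x2 [M2 [n2 [v2 p2]]]]]; first by rewrite addr0; right; exists x1.
have [|cn] := eqVneq (c1 + c2) 0; first by left.
have s_nz : x1 + x2 != 0.
  apply: contra cn => /eqP E0.
  have Ex1 : x1 = (-1) * x2 by apply/eqP; rewrite mulN1r -addr_eq0 E0.
  rewrite -p1 -p2 Ex1 Hpux ?(piN1 Hval Hpi) ?mulN1r ?addNr //.
  exact: valN1 Hval.
have [_ Hsum] := Hpadd x1 x2 n1 n2 s_nz.
have [vs ps] := Hsum ltac:(by rewrite v1 v2) ltac:(by rewrite p1 p2).
by right; exists (x1 + x2); rewrite vs ps p1 p2; split; first exact: HMadd.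
Qed.

Lemma Mg_shift {g h : G} {b : K} {c : F} :
  A b -> val b = Some h -> Mg g c -> Mg (gmul g (gmul h h)) c.
Proof.
case: Hval => _ Hvm _ _; case: Hpan => _ [_ [_ [_ [_ [_ Hpk]]]]].
case: HM => _ _ HMsq Ab vb [->|[x [Mx [xn [vx px]]]]]; first by left.
have bn := val_Some_neq0 Hval vb.
have [k [kn Ek]] := Hpk x b xn bn.
have [u [Hu Eu]] := lift_residue Hpi (invr_neq0 kn).
have Mz : M (b ^+ 2 * x) := HMsq _ _ Ab Mx.
have zn : b ^+ 2 * x != 0 by rewrite mulf_neq0 // expf_neq0.
have [My yn vy py] := M_Bunit_sq Mz zn Hu.
right; exists (u ^+ 2 * (b ^+ 2 * x)); split=> //; split=> //; split.
  by rewrite vy expr2 (Hvm _ _ _ _ (Hvm _ _ _ _ vb vb) vx) gmulC gmulA.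
by rewrite py (mulrC (b ^+ 2)) Ek Eu -px; field.
Qed.

End Fibres.

Theorem mainTheorem5 (G : oAbGroup) (K F : fieldType)
  (val : K -> option G) (pi : K -> F) (pan : K -> F)
  (Hval : is_valuation val) (Hpi : is_residue_map val pi)
  (Hsqrt : forall x, strict_unit val pi x -> exists y, y ^+ 2 = x)
  (Hpan : is_pseudo_angular val pi pan)
  (A : K -> Prop) (HA : is_overring val A)
  (M : K -> Prop) (HM : quasi_quadratic_module A M) :
  let H := valunits val A in
  let adm := fun g : G => H g \/ gle (gone G) g in
  (forall g : G, quasi_quadratic_module (fun _ : F => True) (Mg val pan M g)) /\
  (forall g1 g2 : G, adm g1 -> adm g2 -> same_class_mod_sq H g1 g2 ->
     forall c, Mg val pan M g1 c <-> Mg val pan M g2 c) /\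
  (forall g1 g2 : G, adm g1 -> adm g2 -> same_class_mod_sq (fun _ => True) g1 g2 ->
     gle g1 g2 -> forall c, Mg val pan M g1 c -> Mg val pan M g2 c).
Proof.
move=> H adm; have shift := Mg_shift Hval Hpi Hpan HA HM.
split; [|split].
- move=> g; split=> // [c1 c2|a c _].
  + by apply: (Mg_add Hval Hpi Hpan HM).
  + by apply: (Mg_sqscale Hval Hpi Hpan HA HM).
- (* g1 = g2 val(a)^2 for a unit a of A: shift by a and by a^-1 *)
  move=> g1 g2 _ _ [h [[a [Aa [_ [Aai va]]]] ->]] c; split; last exact: shift _ _ _ _ Aa va.
  by move/(shift _ _ _ _ Aai (val_inv Hval va)); rewrite gmul_sqK.
- (* g1 = g2 h^2 with h <= e: shift by an element of B of value h^-1 *)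
  move=> g1 g2 _ _ [h [_ Eg]] Hle c.
  have [b vb] : exists b, val b = Some (ginv h) by case: Hval => _ _ _ /(_ (ginv h)).
  have Ab : A b.
    case: HA => _ _ _ HAB; apply: HAB; rewrite /valring vb.
    exact: gle_sq_class Eg Hle.
  by move/(shift _ _ _ _ Ab vb); rewrite Eg gmul_sqK.
Qed.
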